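(* Let $N\ge 3$, $h=1/N$, $\tau>0$, $\eta>0$, $\sigma\in\mathbb{R}$, and let $\mathbf{X}^m=(x^m,y^m)^T\in\mathbb{X}^h$ and $\kappa^m\in\mathbb{K}^h$ be given. Let $\widetilde{\mathbf{X}}^{m+1/2}\in\mathbb{X}^h$ be the predicted curve (obtained from $\mathbf{X}^m$ by one step of the ZJB scheme with time step $\tau/2$), let $\widetilde{\mathbf{h}}^{m+1/2}_j=\widetilde{\mathbf{X}}^{m+1/2}(\rho_j)-\widetilde{\mathbf{X}}^{m+1/2}(\rho_{j-1})$ for $j=1,\dots,N$, and let $\widetilde{\mathbf{n}}^{m+1/2}_j=(\widetilde n^{m+1/2}_{j,1},\widetilde n^{m+1/2}_{j,2})^T$ be the unit normal of $\widetilde{\mathbf{X}}^{m+1/2}$ on $I_j$. Assume (i) $(\widetilde n^{m+1/2}_{1,1})^2+(\widetilde n^{m+1/2}_{N,1})^2>0$, and (ii) $\min_{1\le j\le N}|\widetilde{\mathbf{h}}^{m+1/2}_j|>0$. Then the linear system (PC-ZJB scheme): find $\mathbf{X}^{m+1}=(x^{m+1},y^{m+1})^T\in\mathbb{X}^h$ and $\kappa^{m+1}\in\mathbb{K}^h$ such that $$\Big\langle \tfrac{\mathbf{X}^{m+1}-\mathbf{X}^m}{\tau},\widetilde{\mathbf{n}}^{m+1/2}\psi^h\Big\rangle^h_{\widetilde\Gamma^{m+1/2}}+\Big\langle \partial_s\big(\tfrac{\kappa^{m+1}+\kappa^m}{2}\big),\partial_s\psi^h\Big\rangle_{\widetilde\Gamma^{m+1/2}}=0\quad\forall\psi^h\in\mathbb{K}^h,$$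 $$\Big\langle \tfrac{\kappa^{m+1}+\kappa^m}{2}\widetilde{\mathbf{n}}^{m+1/2},\boldsymbol\omega^h\Big\rangle^h_{\widetilde\Gamma^{m+1/2}}-\Big\langle \partial_s\big(\tfrac{\mathbf{X}^{m+1}+\mathbf{X}^m}{2}\big),\partial_s\boldsymbol\omega^h\Big\rangle_{\widetilde\Gamma^{m+1/2}}+\sigma[\omega^h_1(1)-\omega^h_1(0)]$$ $$-\frac{1}{\eta\tau}\Big[\big(x^{m+1}(0)-x^m(0)\big)\omega_1^h(0)+\big(x^{m+1}(1)-x^m(1)\big)\omega_1^h(1)\Big]=0\quad\forall\boldsymbol\omega^h=(\omega^h_1,\omega^h_2)^T\in\mathbb{X}^h,$$ is well-posed, i.e., it has a unique solution $(\mathbf{X}^{m+1},\kappa^{m+1})\in\mathbb{X}^h\times\mathbb{K}^h$.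
   Context: Mesh: $\rho_j=jh$, $j=0,\dots,N$, $I_j=[\rho_{j-1},\rho_j]$. $\mathbb{K}^h$ is the space of continuous functions on $[0,1]$ that are affine on each $I_j$; $\mathbb{K}^h_0=\{\psi\in\mathbb{K}^h:\psi(0)=\psi(1)=0\}$; $\mathbb{X}^h=\mathbb{K}^h\times\mathbb{K}^h_0$ (polygonal open curves with both endpoints on the $x$-axis). For a curve $\mathbf{Y}\in\mathbb{X}^h$ with $\mathbf{h}_j=\mathbf{Y}(\rho_j)-\mathbf{Y}(\rho_{j-1})\neq 0$, define on $I_j$: the unit normal $\mathbf{n}|_{I_j}=\big(-(\mathbf{h}_j)_2,(\mathbf{h}_j)_1\big)^T/|\mathbf{h}_j|$ and the arc-length derivative $\partial_s f|_{I_j}=h\,\partial_\rho f|_{I_j}/|\mathbf{h}_j|$. Inner products on $\mathbf{Y}$: $\langle u,v\rangle_{\mathbf{Y}}=\int_0^1 u\cdot v\,|\partial_\rho\mathbf{Y}|\,d\rho$, and the mass-lumped product $\langle u,v\rangle^h_{\mathbf{Y}}=\frac12\sum_{j=1}^N|\mathbf{h}_j|\big[(u\cdot v)(\rho_j^-)+(u\cdot v)(\rho_{j-1}^+)\big]$, where $u(\rho_j^\pm)$ are one-sided limits. $\widetilde\Gamma^{m+1/2}$ denotes the curve $\widetilde{\mathbf{X}}^{m+1/2}$ and all normals/derivatives/inner products with subscript $\widetilde\Gamma^{m+1/2}$ are taken with respect to it. The ZJB scheme with step $\delta$ from $\mathbf{X}^m$ (with normal $\mathbf{n}^m$ of $\Gamma^m=\mathbf{X}^m$)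 finds $(\mathbf{X}^{new},\kappa^{new})\in\mathbb{X}^h\times\mathbb{K}^h$ with $\langle(\mathbf{X}^{new}-\mathbf{X}^m)/\delta,\mathbf{n}^m\psi\rangle^h_{\Gamma^m}+\langle\partial_s\kappa^{new},\partial_s\psi\rangle_{\Gamma^m}=0$ for all $\psi\in\mathbb{K}^h$ and $\langle\kappa^{new}\mathbf{n}^m,\boldsymbol\omega\rangle^h_{\Gamma^m}-\langle\partial_s\mathbf{X}^{new},\partial_s\boldsymbol\omega\rangle_{\Gamma^m}-\frac{1}{\eta\delta}[(x^{new}(0)-x^m(0))\omega_1(0)+(x^{new}(1)-x^m(1))\omega_1(1)]+\sigma[\omega_1(1)-\omega_1(0)]=0$ for all $\boldsymbol\omega\in\mathbb{X}^h$. This models solid-state dewetting (surface diffusion of an open curve with contact points moving on the substrate, $\eta$ the contact line mobility, $\sigma=\cos\theta_i$ with Young angle $\theta_i$). *)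

(* A function of K^h is
   identified with its vector of nodal values f(rho_0), ..., f(rho_N),
   i.e. an element of {ffun 'I_N.+1 -> R}.  Edges are indexed by nat:
   edge j (0 <= j < N) is the interval I_{j+1} = [rho_j, rho_{j+1}]. *)
From mathcomp Require Import all_boot all_order all_algebra.
Set Implicit Arguments. Unset Strict Implicit. Unset Printing Implicit Defensive.
Import Order.TTheory GRing.Theory Num.Theory.
Local Open Scope ring_scope.

Section PCZJB.
Variable R : rcfType.
Variable N : nat.

Definition P1 := {ffun 'I_N.+1 -> R}.

Definition nd (j : nat) : 'I_N.+1 := inord j.

Definition hmesh : R := (N%:R)^-1.

Definition K0 (f : P1) : Prop := f (nd 0) = 0 /\ f (nd N) = 0.

Definition edx (f : P1) (j : nat) : R := f (nd j.+1) - f (nd j).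

Definition elen (x y : P1) (j : nat) : R :=
  Num.sqrt (edx x j ^+ 2 + edx y j ^+ 2).

Definition nrm1 (x y : P1) (j : nat) : R := - edx y j / elen x y j.
Definition nrm2 (x y : P1) (j : nat) : R := edx x j / elen x y j.

(* arc-length derivative  d_s f = h d_rho f / |h_j|  on edge j,
   with d_rho f = (f(rho_{j+1}) - f(rho_j)) / h *)
Definition ds (x y : P1) (f : P1) (j : nat) : R :=
  hmesh * (edx f j / hmesh) / elen x y j.

(* <d_s u, d_s v>_Y = int_0^1 d_s u d_s v |d_rho Y| drho ; the integrand is
   constant on each I_j (length h), with |d_rho Y| = |h_j| / h there. *)
Definition ip_grad (x y : P1) (u v : P1) : R :=
  \sum_(j < N) hmesh * (ds x y u j * ds x y v j) * (elen x y j / hmesh).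

(* mass-lumped product  1/2 sum_j |h_j| [ (u.v)(rho_j^-) + (u.v)(rho_{j-1}^+) ];
   g j k is the value of the (pointwise) product u.v at node k computed with
   the piecewise constant data of edge j (i.e. the one-sided limit from the
   interior of edge j). *)
Definition ip_lump (x y : P1) (g : nat -> 'I_N.+1 -> R) : R :=
  2^-1 * \sum_(j < N) elen x y j * (g j (nd j.+1) + g j (nd j)).

Definition ZJB (eta sigma delta : R) (xm ym xn yn kn : P1) : Prop :=
  K0 yn /\
  (forall psi : P1,
     ip_lump xm ym (fun j k =>
        ((xn k - xm k) / delta * nrm1 xm ym j
         + (yn k - ym k) / delta * nrm2 xm ym j) * psi k)
     + ip_grad xm ym kn psi = 0) /\
  (forall w1 w2 : P1, K0 w2 ->
     ip_lump xm ym (fun j k => kn k * (nrm1 xm ym j * w1 k + nrm2 xm ym j * w2 k))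
     - (ip_grad xm ym xn w1 + ip_grad xm ym yn w2)
     - (eta * delta)^-1 * ((xn (nd 0) - xm (nd 0)) * w1 (nd 0)
                           + (xn (nd N) - xm (nd N)) * w1 (nd N))
     + sigma * (w1 (nd N) - w1 (nd 0)) = 0).

Definition avg (f g : P1) : P1 := [ffun k => (f k + g k) / 2].

Definition PCZJB (eta sigma tau : R) (xm ym km xt yt x1 y1 k1 : P1) : Prop :=
  K0 y1 /\
  (forall psi : P1,
     ip_lump xt yt (fun j k =>
        ((x1 k - xm k) / tau * nrm1 xt yt j
         + (y1 k - ym k) / tau * nrm2 xt yt j) * psi k)
     + ip_grad xt yt (avg k1 km) psi = 0) /\
  (forall w1 w2 : P1, K0 w2 ->
     ip_lump xt yt (fun j k =>
        avg k1 km k * (nrm1 xt yt j * w1 k + nrm2 xt yt j * w2 k))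
     - (ip_grad xt yt (avg x1 xm) w1 + ip_grad xt yt (avg y1 ym) w2)
     + sigma * (w1 (nd N) - w1 (nd 0))
     - (eta * tau)^-1 * ((x1 (nd 0) - xm (nd 0)) * w1 (nd 0)
                         + (x1 (nd N) - xm (nd N)) * w1 (nd N)) = 0).

End PCZJB.

(* The scheme is a square linear system for the nodal values of
   (X^{m+1}, kappa^{m+1}), so it is well posed as soon as the homogeneous system
   has only the trivial solution.  Testing the homogeneous system with
   psi = kappa and omega = X, the lumped coupling terms cancel in
   tau/2 (first equation) - (second equation), which leaves the discrete
   Dirichlet energies of kappa, x and y plus the contact-line term
   (eta tau)^-1 (x(0)^2 + x(1)^2).  Hence x = y = 0 and kappa is a constant c.
   Testing the second equation with the hat functions of the two end nodes then
   gives c n_{1,1} = c n_{N,1} = 0, and assumption (i) forces c = 0. *)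

From HB Require Import structures.
From Pilot Require Import Defs.
From mathcomp Require Import all_boot all_order all_algebra.
From mathcomp Require Import ring lra.
Set Implicit Arguments. Unset Strict Implicit. Unset Printing Implicit Defensive.
Import Order.TTheory GRing.Theory Num.Theory.
Local Open Scope ring_scope.

Lemma linear_ker0_surj (K : fieldType) (vT : vectType K) (f : vT -> vT) :
  linear f -> (forall u, f u = 0 -> u = 0) -> forall b, exists u, f u = b.
Proof.
move=> flin fker0 b.
pose fL : {linear vT -> vT} := HB.pack f (GRing.isLinear.Build _ _ _ _ f flin).
have kerf0 : lker (linfun fL) == 0%VS.
  apply/lker0P => u v; rewrite !lfunE /= => fuv; apply: subr0_eq; apply: fker0.
  by have := linearB fL u v; rewrite /= fuv subrr.
by exists ((linfun fL)^-1%VF b); have := lker0_lfunVK kerf0 b; rewrite lfunE.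
Qed.

Lemma big_lincomb (R : pzRingType) (n : nat) (a : R) (F G H : 'I_n -> R) :
  (forall j, a * F j + G j = H j) -> a * \sum_j F j + \sum_j G j = \sum_j H j.
Proof. by move=> h; rewrite mulr_sumr -big_split; apply: eq_bigr => j _; apply: h. Qed.

Section NodalFunctions.
Variables (R : rcfType) (N : nat).
Local Notation P := (P1 R N).
Local Notation nd := (nd N).

(* [P] is not an R-module in the library (only [R^o] is), hence [lcomb]. *)
Definition lcomb (a : R) (u v : P) : P := [ffun i => a * u i + v i].

Definition nodal (k : 'I_N.+1) : P := [ffun i => (i == k)%:R].

Lemma lcomb1l u : lcomb 1 u 0 = u.
Proof. by apply/ffunP => i; rewrite !ffunE mul1r addr0. Qed.

Lemma lcomb1r v : lcomb 1 0 v = v.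
Proof. by apply/ffunP => i; rewrite !ffunE mulr0 add0r. Qed.

Lemma lcomb0 a : lcomb a 0 0 = 0.
Proof. by apply/ffunP => i; rewrite !ffunE mulr0 addr0. Qed.

Lemma lcombN1 u v : lcomb (-1) u v = v - u.
Proof. by apply/ffunP => i; rewrite !ffunE mulN1r addrC. Qed.

Lemma nodal_expansion (F : P -> R) :
  (forall a u v, F (lcomb a u v) = a * F u + F v) ->
  forall u, F u = \sum_k u k * F (nodal k).
Proof.
move=> Flin u.
have F0 : F 0 = 0.
  by apply: (addrI (F 0)); rewrite addr0 -{3}(lcomb0 1) Flin mul1r.
have partial (r : seq 'I_N.+1) :
    F [ffun i => \sum_(k <- r) u k * nodal k i] = \sum_(k <- r) u k * F (nodal k).
  elim: r => [|k r IH]; last rewrite big_cons -IH -Flin.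
    by rewrite big_nil -F0; congr F; apply/ffunP => i; rewrite !ffunE big_nil.
  by congr F; apply/ffunP => i; rewrite !ffunE big_cons ffunE.
rewrite -partial; congr F; apply/ffunP => i; rewrite ffunE (bigD1 i) //= ffunE eqxx mulr1.
by rewrite big1 ?addr0 // => k /negbTE ki; rewrite ffunE eq_sym ki mulr0.
Qed.

Lemma nd_eq a b : (a <= N)%N -> (b <= N)%N -> (nd a == nd b) = (a == b).
Proof. by move=> ha hb; rewrite -val_eqE /= !inordK. Qed.

Lemma sum_edges_at_node (F : nat -> R) (i : nat) : (i <= N)%N ->
  \sum_(j < N) F j * (nodal (nd i) (nd j.+1) + nodal (nd i) (nd j)) =
  (if (0 < i)%N then F i.-1 else 0) + (if (i < N)%N then F i else 0).
Proof.
move=> iN; rewrite (eq_bigr _ (fun j _ => mulrDr _ _ _)) big_split /=.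
have pick k : (k < N)%N -> \sum_(j < N) F j * (j == k :> nat)%:R = F k.
  move=> kN; rewrite (bigD1 (Ordinal kN)) //= eqxx mulr1 big1 ?addr0 // => j.
  by rewrite -val_eqE /= => /negbTE ->; rewrite mulr0.
have jN (j : 'I_N) : (j <= N)%N by apply: ltnW.
congr (_ + _).
- case: i iN => [|i] iN.
    by rewrite big1 // => j _; rewrite ffunE nd_eq // mulr0.
  by rewrite -pick //; apply: eq_bigr => j _; rewrite ffunE nd_eq ?eqSS.
- case: ltnP => [iN'|Ni].
    by rewrite -pick //; apply: eq_bigr => j _; rewrite ffunE nd_eq.
  rewrite big1 // => j _; rewrite ffunE nd_eq // ltn_eqF ?mulr0 //.
  exact: leq_trans (ltn_ord j) Ni.
Qed.

Lemma edx_eq0_const (f : P) : (forall j, (j < N)%N -> edx f j = 0) ->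
  forall i, f i = f (nd 0).
Proof.
move=> h i.
suff fnd j : (j <= N)%N -> f (nd j) = f (nd 0).
  by rewrite -(fnd i (ltn_ord i)) /Defs.nd inord_val.
elim: j => [//|j IH hj].
by have /eqP := h j hj; rewrite subr_eq0 => /eqP ->; apply/IH/ltnW.
Qed.

End NodalFunctions.

Arguments nodal {R N}.

Section Scheme.
Variables (R : rcfType) (N : nat).
Local Notation P := (P1 R N).
Local Notation nd := (nd N).
Variables (xt yt : P) (eta tau : R).

Definition lump_at (g : nat -> 'I_N.+1 -> R) (j : nat) : R :=
  2^-1 * (elen xt yt j * (g j (nd j.+1) + g j (nd j))).

Definition grad_at (u v : P) (j : nat) : R :=
  hmesh R N * (ds xt yt u j * ds xt yt v j) * (elen xt yt j / hmesh R N).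

Definition pc_res1 (xm ym km x y k psi : P) : R :=
  \sum_(j < N)
    (lump_at (fun j i => ((x i - xm i) / tau * nrm1 xt yt j
                         + (y i - ym i) / tau * nrm2 xt yt j) * psi i) j
     + grad_at (avg k km) psi j).

Definition pc_bdry (sigma : R) (xm x w1 : P) : R :=
  sigma * (w1 (nd N) - w1 (nd 0))
  - (eta * tau)^-1 * ((x (nd 0) - xm (nd 0)) * w1 (nd 0)
                      + (x (nd N) - xm (nd N)) * w1 (nd N)).

Definition pc_res2 (sigma : R) (xm ym km x y k w1 w2 : P) : R :=
  \sum_(j < N)
    (lump_at (fun j i => avg k km i * (nrm1 xt yt j * w1 i + nrm2 xt yt j * w2 i)) j
     - (grad_at (avg x xm) w1 j + grad_at (avg y ym) w2 j))
  + pc_bdry sigma xm x w1.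

Lemma PCZJB_residuals sigma xm ym km x y k :
  PCZJB eta sigma tau xm ym km xt yt x y k <->
  [/\ K0 y, forall psi, pc_res1 xm ym km x y k psi = 0
          & forall w1 w2, K0 w2 -> pc_res2 sigma xm ym km x y k w1 w2 = 0].
Proof.
have res1E psi : pc_res1 xm ym km x y k psi =
    ip_lump xt yt (fun j i => ((x i - xm i) / tau * nrm1 xt yt j
                              + (y i - ym i) / tau * nrm2 xt yt j) * psi i)
    + ip_grad xt yt (avg k km) psi.
  by rewrite /pc_res1 big_split /= -mulr_sumr.
have res2E w1 w2 : pc_res2 sigma xm ym km x y k w1 w2 =
    ip_lump xt yt (fun j i => avg k km i * (nrm1 xt yt j * w1 i + nrm2 xt yt j * w2 i))
    - (ip_grad xt yt (avg x xm) w1 + ip_grad xt yt (avg y ym) w2)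
    + sigma * (w1 (nd N) - w1 (nd 0))
    - (eta * tau)^-1 * ((x (nd 0) - xm (nd 0)) * w1 (nd 0)
                        + (x (nd N) - xm (nd N)) * w1 (nd N)).
  by rewrite /pc_res2 /pc_bdry sumrB big_split /= -mulr_sumr !addrA.
split=> [[y0 [eq1 eq2]]|[y0 eq1 eq2]].
  by split=> // [psi|w1 w2 w20]; rewrite ?res1E ?res2E ?eq1 ?eq2.
by split=> //; split=> [psi|w1 w2 w20]; rewrite -?res1E -?res2E ?eq1 ?eq2.
Qed.

Lemma pc_res1_linear a xm ym km x y k xm' ym' km' x' y' k' psi :
  pc_res1 (lcomb a xm xm') (lcomb a ym ym') (lcomb a km km')
          (lcomb a x x') (lcomb a y y') (lcomb a k k') psi =
  a * pc_res1 xm ym km x y k psi + pc_res1 xm' ym' km' x' y' k' psi.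
Proof.
symmetry; apply: big_lincomb => j.
by rewrite /lump_at /grad_at /ds /edx /avg /lcomb !ffunE; ring.
Qed.

Lemma pc_res2_linear a sigma xm ym km x y k sigma' xm' ym' km' x' y' k' w1 w2 :
  pc_res2 (a * sigma + sigma') (lcomb a xm xm') (lcomb a ym ym') (lcomb a km km')
          (lcomb a x x') (lcomb a y y') (lcomb a k k') w1 w2 =
  a * pc_res2 sigma xm ym km x y k w1 w2 + pc_res2 sigma' xm' ym' km' x' y' k' w1 w2.
Proof.
rewrite /pc_res2 mulrDr addrACA; congr (_ + _).
  symmetry; apply: big_lincomb => j.
  by rewrite /lump_at /grad_at /ds /edx /avg /lcomb !ffunE; ring.
by rewrite /pc_bdry /lcomb !ffunE; ring.
Qed.

Lemma pc_res1_test_linear xm ym km x y k a u v :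
  pc_res1 xm ym km x y k (lcomb a u v) =
  a * pc_res1 xm ym km x y k u + pc_res1 xm ym km x y k v.
Proof.
symmetry; apply: big_lincomb => j.
by rewrite /lump_at /grad_at /ds /edx /avg /lcomb !ffunE; ring.
Qed.

Lemma pc_res2_test_linear sigma xm ym km x y k a u1 u2 v1 v2 :
  pc_res2 sigma xm ym km x y k (lcomb a u1 v1) (lcomb a u2 v2) =
  a * pc_res2 sigma xm ym km x y k u1 u2 + pc_res2 sigma xm ym km x y k v1 v2.
Proof.
rewrite /pc_res2 mulrDr addrACA; congr (_ + _).
  symmetry; apply: big_lincomb => j.
  by rewrite /lump_at /grad_at /ds /edx /avg /lcomb !ffunE; ring.
by rewrite /pc_bdry /lcomb !ffunE; ring.
Qed.


Hypothesis N_gt0 : (0 < N)%N.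
Hypothesis elen_gt0 : forall j, (j < N)%N -> 0 < elen xt yt j.

Lemma hmesh_neq0 : hmesh R N != 0.
Proof. by rewrite invr_eq0 pnatr_eq0 -lt0n. Qed.

Lemma grad_at_diag u j : (j < N)%N -> grad_at u u j = edx u j ^+ 2 / elen xt yt j.
Proof. by move=> jN; rewrite /grad_at /ds; field; rewrite hmesh_neq0 gt_eqF ?elen_gt0. Qed.

Lemma grad_at_diag_ge0 u j : (j < N)%N -> 0 <= grad_at u u j.
Proof. by move=> jN; rewrite grad_at_diag // divr_ge0 ?sqr_ge0 ?ltW ?elen_gt0. Qed.

Lemma ip_grad_ge0 u : 0 <= ip_grad xt yt u u.
Proof. by apply: sumr_ge0 => j _; apply: grad_at_diag_ge0. Qed.

Lemma ip_grad_eq0_const u : ip_grad xt yt u u = 0 -> forall i, u i = u (nd 0).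
Proof.
move=> G0; apply: edx_eq0_const => j jN.
have /= := @psumr_eq0P _ _ _ _ (fun i _ => grad_at_diag_ge0 u (ltn_ord i)) G0
  (Ordinal jN) isT.
rewrite grad_at_diag // => /eqP; rewrite mulf_eq0 invr_eq0 (gt_eqF (elen_gt0 jN)) orbF.
by rewrite sqrf_eq0 => /eqP.
Qed.

Hypothesis tau_gt0 : 0 < tau.

Lemma pc_energy x y k :
  tau / 2 * pc_res1 0 0 0 x y k k - pc_res2 0 0 0 0 x y k x y =
  tau / 4 * ip_grad xt yt k k + 2^-1 * (ip_grad xt yt x x + ip_grad xt yt y y)
  + (eta * tau)^-1 * (x (nd 0) ^+ 2 + x (nd N) ^+ 2).
Proof.
rewrite /pc_res1 /pc_res2 /ip_grad -big_split !mulr_sumr -big_split /=.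
rewrite opprD addrA -sumrB; congr (_ + _); last by rewrite /pc_bdry !ffunE; ring.
apply: eq_bigr => j _; rewrite /lump_at /grad_at /ds /edx /avg !ffunE.
by field; rewrite hmesh_neq0 gt_eqF ?elen_gt0 // gt_eqF.
Qed.

Hypothesis eta_gt0 : 0 < eta.

Lemma pc_homogeneous_static x y k :
  PCZJB eta 0 tau 0 0 0 xt yt x y k -> [/\ x = 0, y = 0 & k = [ffun=> k (nd 0)]].
Proof.
move=> /PCZJB_residuals [[y0 yN] eq1 eq2].
have energy0 : tau / 4 * ip_grad xt yt k k + 2^-1 * (ip_grad xt yt x x + ip_grad xt yt y y)
    + (eta * tau)^-1 * (x (nd 0) ^+ 2 + x (nd N) ^+ 2) = 0.
  by rewrite -pc_energy eq1 eq2 // mulr0 subr0.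
have Gx := ip_grad_ge0 x; have Gy := ip_grad_ge0 y.
have [Gk0 [Gxy0 bd0]] : [/\ tau / 4 * ip_grad xt yt k k = 0,
    2^-1 * (ip_grad xt yt x x + ip_grad xt yt y y) = 0
  & (eta * tau)^-1 * (x (nd 0) ^+ 2 + x (nd N) ^+ 2) = 0].
  have : 0 <= tau / 4 * ip_grad xt yt k k by rewrite mulr_ge0 ?ip_grad_ge0 ?divr_ge0 ?ltW.
  have : 0 <= (eta * tau)^-1 * (x (nd 0) ^+ 2 + x (nd N) ^+ 2).
    by rewrite mulr_ge0 ?addr_ge0 ?sqr_ge0 // invr_ge0 mulr_ge0 // ltW.
  by split; lra.
move/eqP: Gk0; rewrite mulf_eq0 gt_eqF ?divr_gt0 //= => /eqP Gk0.
have Gx0 : ip_grad xt yt x x = 0 by lra.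
have Gy0 : ip_grad xt yt y y = 0 by lra.
have x00 : x (nd 0) = 0.
  move/eqP: bd0; rewrite mulf_eq0 invr_eq0 gt_eqF ?mulr_gt0 //=.
  by rewrite paddr_eq0 ?sqr_ge0 // sqrf_eq0 => /andP [/eqP].
split; apply/ffunP => i; rewrite !ffunE.
- by rewrite (ip_grad_eq0_const Gx0).
- by rewrite (ip_grad_eq0_const Gy0).
- exact: ip_grad_eq0_const.
Qed.

Hypothesis end_normals : 0 < nrm1 xt yt 0 ^+ 2 + nrm1 xt yt N.-1 ^+ 2.

Lemma pc_homogeneous_const_curvature c :
  PCZJB eta 0 tau 0 0 0 xt yt 0 0 [ffun=> c] -> c = 0.
Proof.
move=> /PCZJB_residuals [_ _ eq2].
pose F j := 2^-1 * elen xt yt j * (c / 2 * nrm1 xt yt j).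
have node_test i : (i <= N)%N ->
    \sum_(j < N) F j * (nodal (nd i) (nd j.+1) + nodal (nd i) (nd j)) = 0.
  have K00 : K0 (0 : P) by split; rewrite ffunE.
  move=> iN; rewrite -[RHS](eq2 (nodal (nd i)) 0 K00) /pc_res2 -[LHS]addr0.
  congr (_ + _); last by rewrite /pc_bdry !ffunE; ring.
  apply: eq_bigr => j _; move: (nodal (nd i)) => w.
  by rewrite /F /lump_at /grad_at /ds /edx /avg !ffunE; ring.
have cn1_eq0 j : (j < N)%N -> F j = 0 -> c * nrm1 xt yt j = 0.
  move=> jN Fj0; have -> : c * nrm1 xt yt j = F j * 4 / elen xt yt j.
    by rewrite /F; field; rewrite gt_eqF ?elen_gt0.
  by rewrite Fj0 !mul0r.
have cn1_first : c * nrm1 xt yt 0 = 0.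
  apply: cn1_eq0 => //; have := node_test 0%N isT.
  by rewrite (sum_edges_at_node F) // ltnn N_gt0 add0r.
have cn1_last : c * nrm1 xt yt N.-1 = 0.
  apply: cn1_eq0; first by rewrite prednK.
  by have := node_test N (leqnn N); rewrite (sum_edges_at_node F) // ltnn N_gt0 addr0.
have : c ^+ 2 * (nrm1 xt yt 0 ^+ 2 + nrm1 xt yt N.-1 ^+ 2) = 0.
  by rewrite mulrDr -!exprMn cn1_first cn1_last expr0n addr0.
by move/eqP; rewrite mulf_eq0 (gt_eqF end_normals) orbF sqrf_eq0 => /eqP.
Qed.

Lemma pc_homogeneous_trivial x y k :
  PCZJB eta 0 tau 0 0 0 xt yt x y k -> [/\ x = 0, y = 0 & k = 0].
Proof.
move=> sol; have [x0 y0 kc] := pc_homogeneous_static sol.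
move: sol; rewrite x0 y0 kc => /pc_homogeneous_const_curvature c0.
by split=> //; apply/ffunP => i; rewrite !ffunE c0.
Qed.

Lemma pc_sub_solution sigma xm ym km x y k x' y' k' :
  PCZJB eta sigma tau xm ym km xt yt x y k ->
  PCZJB eta sigma tau xm ym km xt yt x' y' k' ->
  PCZJB eta 0 tau 0 0 0 xt yt (x - x') (y - y') (k - k').
Proof.
move=> /PCZJB_residuals [[y0 yN] eq1 eq2] /PCZJB_residuals [[y0' yN'] eq1' eq2'].
apply/PCZJB_residuals; split.
- by split; rewrite !ffunE ?y0 ?y0' ?yN ?yN' subrr.
- move=> psi; have := pc_res1_linear (-1) xm ym km x' y' k' xm ym km x y k psi.
  by rewrite !lcombN1 !subrr eq1 eq1' mulr0 addr0.
- move=> w1 w2 w2bc.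
  have := pc_res2_linear (-1) sigma xm ym km x' y' k' sigma xm ym km x y k w1 w2.
  by rewrite !lcombN1 !subrr mulN1r addNr eq2 ?eq2' // mulr0 addr0.
Qed.

Definition row_x : 'I_3 := @Ordinal 3 0 isT.
Definition row_y : 'I_3 := @Ordinal 3 1 isT.
Definition row_k : 'I_3 := @Ordinal 3 2 isT.

Definition row_fun (M : 'M[R]_(3, N.+1)) (r : 'I_3) : P := [ffun i => M r i].

(* Row [row_k] tests the second equation with (0, phi_i) at interior nodes only
   and imposes y(0) = y(1) = 0 at the end nodes, so that the system is square. *)
Definition pc_residual sigma (xm ym km : P) (M : 'M[R]_(3, N.+1)) : 'M[R]_(3, N.+1) :=
  let x := row_fun M row_x in let y := row_fun M row_y in let k := row_fun M row_k in
  \matrix_(r, i)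
    if r == row_x then pc_res1 xm ym km x y k (nodal i)
    else if r == row_y then pc_res2 sigma xm ym km x y k (nodal i) 0
    else if (i == nd 0) || (i == nd N) then y i
    else pc_res2 sigma xm ym km x y k 0 (nodal i).

Lemma pc_residual_sound sigma xm ym km M :
  pc_residual sigma xm ym km M = 0 ->
  PCZJB eta sigma tau xm ym km xt yt (row_fun M row_x) (row_fun M row_y) (row_fun M row_k).
Proof.
move=> res0; have ent r i : pc_residual sigma xm ym km M r i = 0 by rewrite res0 mxE.
apply/PCZJB_residuals; split.
- by split; [have := ent row_k (nd 0) | have := ent row_k (nd N)];
    rewrite mxE /= eqxx ?orbT ffunE.
- move=> psi; rewrite (nodal_expansion (pc_res1_test_linear _ _ _ _ _ _) psi).
  by rewrite big1 // => i _; have := ent row_x i; rewrite mxE /= => ->; rewrite mulr0.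
- move=> w1 w2 [w20 w2N].
  set F := pc_res2 sigma xm ym km _ _ _.
  have Flin a u1 v1 u2 v2 : F (lcomb a u1 v1) (lcomb a u2 v2) = a * F u1 u2 + F v1 v2.
    exact: pc_res2_test_linear.
  have -> : F w1 w2 = F w1 0 + F 0 w2 by rewrite -[F w1 0]mul1r -Flin lcomb1l lcomb1r.
  rewrite (nodal_expansion (F := F^~ 0)) => [|a u v]; last by rewrite -Flin lcomb0.
  rewrite (nodal_expansion (F := F 0)) => [|a u v]; last by rewrite -Flin lcomb0.
  rewrite /F !big1 ?addr0 // => i _.
    have [/orP[]/eqP->|bc] := boolP ((i == nd 0) || (i == nd N));
      rewrite ?w20 ?w2N ?mul0r //.
    by have := ent row_k i; rewrite mxE /= (negbTE bc) => ->; rewrite mulr0.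
  by have := ent row_y i; rewrite mxE /= => ->; rewrite mulr0.
Qed.

Lemma row_fun_lincomb a M M' r :
  row_fun (a *: M + M') r = lcomb a (row_fun M r) (row_fun M' r).
Proof. by apply/ffunP => i; rewrite !ffunE !mxE. Qed.

Lemma pc_residual_linear a sigma xm ym km M sigma' xm' ym' km' M' :
  pc_residual (a * sigma + sigma') (lcomb a xm xm') (lcomb a ym ym') (lcomb a km km')
              (a *: M + M') =
  a *: pc_residual sigma xm ym km M + pc_residual sigma' xm' ym' km' M'.
Proof.
apply/matrixP => r i; rewrite !mxE !row_fun_lincomb.
case: ifP => _; first exact: pc_res1_linear.
case: ifP => _; first exact: pc_res2_linear.
by case: ifP => _; [rewrite ffunE | exact: pc_res2_linear].
Qed.

Lemma pc_residual0_linear : linear (pc_residual 0 0 0 0).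
Proof.
move=> a M M'; have := pc_residual_linear a 0 0 0 0 M 0 0 0 0 M'.
by rewrite mulr0 addr0 !lcomb0.
Qed.

Lemma pc_residual_split sigma xm ym km M :
  pc_residual sigma xm ym km M = pc_residual 0 0 0 0 M + pc_residual sigma xm ym km 0.
Proof.
have := pc_residual_linear 1 0 0 0 0 M sigma xm ym km 0.
by rewrite mul1r add0r !lcomb1r !scale1r addr0.
Qed.

Lemma pc_residual0_ker M : pc_residual 0 0 0 0 M = 0 -> M = 0.
Proof.
move=> /pc_residual_sound /pc_homogeneous_trivial [x0 y0 k0].
apply/matrixP => r i; rewrite mxE.
have [->|->|->] : [\/ r = row_x, r = row_y | r = row_k].
  case: r => [[|[|[|//]]] ?]; [constructor 1|constructor 2|constructor 3];
    exact: val_inj.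
- by move/ffunP/(_ i): x0; rewrite !ffunE.
- by move/ffunP/(_ i): y0; rewrite !ffunE.
- by move/ffunP/(_ i): k0; rewrite !ffunE.
Qed.

Lemma pc_residual_solvable sigma xm ym km : exists M, pc_residual sigma xm ym km M = 0.
Proof.
have [M resM] := linear_ker0_surj pc_residual0_linear pc_residual0_ker
  (- pc_residual sigma xm ym km 0).
by exists M; rewrite pc_residual_split resM addNr.
Qed.

End Scheme.

Theorem theorem3p1 (R : rcfType) (N : nat) (tau eta sigma : R)
  (xm ym km xt yt : P1 R N)
  (hN : (3 <= N)%N) (htau : 0 < tau) (heta : 0 < eta)
  (hXm : K0 ym)
  (hpred : exists kt : P1 R N, ZJB eta sigma (tau / 2) xm ym xt yt kt)
  (hi : 0 < nrm1 xt yt 0 ^+ 2 + nrm1 xt yt N.-1 ^+ 2)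
  (hii : forall j : nat, (j < N)%N -> 0 < elen xt yt j) :
  exists! s : P1 R N * P1 R N * P1 R N,
    PCZJB eta sigma tau xm ym km xt yt s.1.1 s.1.2 s.2.
Proof.
have N_gt0 : (0 < N)%N by apply: leq_trans hN.
have [M /pc_residual_sound sol] :=
  pc_residual_solvable N_gt0 hii htau heta hi sigma xm ym km.
exists (row_fun M row_x, row_fun M row_y, row_fun M row_k); split=> // [[[x y] k]] /= sol'.
by have [/subr0_eq -> /subr0_eq -> /subr0_eq ->] :=
  pc_homogeneous_trivial N_gt0 hii htau heta hi (pc_sub_solution sol sol').
Qed.
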